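(* Let $1\le t\le\min(r,s)$ and $\tau_t=e_{r,r+1}e_{r-1,r+2}\cdots e_{r-t+1,r+t}\in B_{r,s}(\delta)$. Then (1) $(L_{r-a+1}+L_{r+a})\tau_t=0$ for every $1\le a\le t$; (2) $\big(-\sum_{i=r-t+1}^{r}e_{i,j}+\sum_{i=r+1}^{r+t}(i,j)\big)\tau_t=0$ for every $j$ with $r+t+1\le j\le r+s$.
   Context: $B_{r,s}(\delta)$ ($r,s\ge0$, $\delta\in\mathbb C$) is the walled Brauer algebra with basis the $(r,s)$-walled Brauer diagrams (two rows of $r+s$ vertices numbered $1,\dots,r+s$, wall after the first $r$ in each row, each vertex joined to exactly one other, vertical strands do not cross the wall, horizontal strands within a row cross it), product by stacking $d_1$ under $d_2$ (top of $d_1$ identified with bottom of $d_2$) and multiplying by $\delta^n$ for $n$ removed closed loops. $(a,b)$ ($a<b$ on the same side of the wall) is the transposition diagram; $e_{j,k}$ ($j\le r<k$) has horizontal strands joining $j,k$ in both rows, others straight. $L_k=\sum_{j=1}^{k-1}(j,k)$ for $k\le r$, $L_k=-\sum_{j=1}^r e_{j,k}+\sum_{j=r+1}^{k-1}(j,k)+\delta$ for $r<k\le r+s$. *)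

From HB Require Import structures.
From mathcomp Require Import all_boot all_order all_algebra algC.
Set Implicit Arguments. Unset Strict Implicit. Unset Printing Implicit Defensive.
Import Order.TTheory GRing.Theory Num.Theory.

Section WalledBrauer.
Variables (r s : nat).
Local Notation n := (r + s).

(* Vertices of a diagram: (true, i) = top-row vertex number i+1,
   (false, i) = bottom-row vertex number i+1, for i : 'I_(r+s). *)
Definition V := (bool * 'I_n)%type.

(* left side of the wall: vertex numbers 1..r, i.e. index i < r *)
Definition walled (x y : V) : bool :=
  if x.1 == y.1 then (x.2 < r) != (y.2 < r) else (x.2 < r) == (y.2 < r).

(* f encodes the perfect matching: f x is the vertex joined to x *)
Definition is_wbd (f : {ffun V -> V}) : bool :=
  [forall x, [&& f (f x) == x, f x != x & walled x (f x)]].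

Definition WBD := {f : {ffun V -> V} | is_wbd f}.

(* level 0 = bottom of d1, 1 = middle (top of d1 = bottom of d2), 2 = top of d2 *)
Definition W := ('I_3 * 'I_n)%type.
Definition lvl (k : nat) : 'I_3 := inZp k.
Definition emb1 (v : V) : W := (if v.1 then lvl 1 else lvl 0, v.2).
Definition emb2 (v : V) : W := (if v.1 then lvl 2 else lvl 1, v.2).
Definition outer (v : V) : W := (if v.1 then lvl 2 else lvl 0, v.2).

Definition comp_edge (d1 d2 : {ffun V -> V}) : rel W :=
  fun x y => [exists u, (emb1 u == x) && (emb1 (d1 u) == y)]
          || [exists u, (emb2 u == x) && (emb2 (d2 u) == y)].

Definition comp (d1 d2 : {ffun V -> V}) : {ffun V -> V} :=
  [ffun v => if [pick w : V | (w != v) &&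
                   connect (comp_edge d1 d2) (outer v) (outer w)] is Some w
             then w else v].

(* number of closed loops: components lying entirely in the middle row,
   counted by their (unique) roots *)
Definition loops (d1 d2 : {ffun V -> V}) : nat :=
  #|[set x : W | [&& val x.1 == 1%N :> nat, fingraph.root (comp_edge d1 d2) x == x &
        [forall y : W, connect (comp_edge d1 d2) x y ==> (val y.1 == 1%N :> nat)]]]|.

Definition WBA := {ffun WBD -> algC}.

Variable delta : algC.

Definition mulB (a b : WBA) : WBA :=
  [ffun d => (\sum_(d1 : WBD) \sum_(d2 : WBD | comp (val d1) (val d2) == val d)
               a d1 * b d2 * delta ^+ loops (val d1) (val d2))%R].

(* the basis element attached to a matching f (zero if f is not walled) *)
Definition dg (f : {ffun V -> V}) : WBA := [ffun d => ((val d == f) : nat)%:R%R].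

Definition oneB : WBA := dg [ffun v => (~~ v.1, v.2)].

Definition sw (a b m : nat) : nat := if m == a then b else if m == b then a else m.

(* transposition diagram (a,b), 1-based vertex numbers *)
Definition trB (a b : nat) : WBA :=
  dg [ffun v => (~~ v.1, insubd v.2 (sw a b (val v.2).+1).-1)].

(* e_{j,k}, 1-based: horizontal strands j--k in both rows, others straight *)
Definition eB (j k : nat) : WBA :=
  dg [ffun v => if ((val v.2).+1 == j) || ((val v.2).+1 == k)
               then (v.1, insubd v.2 (sw j k (val v.2).+1).-1)
               else (~~ v.1, v.2)].

Definition scB (c : algC) (x : WBA) : WBA := [ffun d => (c * x d)%R].

Definition LB (k : nat) : WBA :=
  if (k <= r)%N then (\sum_(1 <= j < k) trB j k)%R
  else (- \sum_(1 <= j < r.+1) eB j k + \sum_(r.+1 <= j < k) trB j k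
        + scB delta oneB)%R.

Fixpoint tauB (t : nat) : WBA :=
  match t with
  | 0 => oneB
  | t'.+1 => mulB (tauB t') (eB (r - t') (r + t'.+1))
  end.

End WalledBrauer.
Arguments mulB r s delta a b : clear implicits.
Arguments scB r s c x : clear implicits.

From Pilot Require Import Defs.
From HB Require Import structures.
From mathcomp Require Import all_boot all_order all_algebra algC.
From mathcomp Require Import perm zify.
Import Order.TTheory GRing.Theory Num.Theory.
Set Implicit Arguments. Unset Strict Implicit. Unset Printing Implicit Defensive.

(* In each row, tau_t joins the vertex i to its mirror image 2r+1-i for r-t < i <= r+t.
   A product e_{j,k} tau_t is computed by following strands through the middle row: if
   tau_t joins the bottom vertices k and m, then e_{j,k} tau_t = (j,m) tau_t when m <> j,
   and e_{j,k} tau_t = delta tau_t when m = j, the strand j--k then closing one loop.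
   For r < k <= r+t and k' = 2r+1-k this splits L_k tau_t: the e_{j,k} with j < k' give
   the terms of L_{k'} tau_t, e_{k',k} cancels delta tau_t, and for k' < j <= r the
   reflection j |-> 2r+1-j turns e_{j,k} into the transpositions (i,k), r < i < k, of L_k.
   Hence L_k tau_t = -L_{k'} tau_t, which is (1); the same reflection gives (2). *)

Section CompositionGraph.
Variables (r s : nat) (f g : {ffun V r s -> V r s}).
Hypotheses (fK : involutive f) (gK : involutive g).
Local Notation W := (W r s).
Local Notation e := (comp_edge f g).

Definition midrow (x : W) : bool := val x.1 == 1%N.

Lemma midrowE x : midrow x -> x = (lvl 1, x.2).
Proof. by case: x => [l i] /= /eqP h; congr pair; apply: val_inj; rewrite /= h. Qed.

Lemma outer_midrowF u : midrow (outer u) = false.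
Proof. by case: u => [[] i]. Qed.

Lemma emb1_inj : injective (@emb1 r s).
Proof. by move=> [[] i] [[] j] /pair_equal_spec[h1 /= ->] //; move/(congr1 val): h1. Qed.

Lemma emb2_inj : injective (@emb2 r s).
Proof. by move=> [[] i] [[] j] /pair_equal_spec[h1 /= ->] //; move/(congr1 val): h1. Qed.

Lemma outer_inj : injective (@outer r s).
Proof. by move=> [[] i] [[] j] /pair_equal_spec[h1 /= ->] //; move/(congr1 val): h1. Qed.

Lemma emb1_emb2_midrow u u' : emb1 u = emb2 u' -> midrow (emb1 u).
Proof. by case: u u' => [[] i] [[] j] /pair_equal_spec[h1 _] //; move/(congr1 val): h1. Qed.

Lemma comp_edgeP x y : reflect
  ((exists u, emb1 u = x /\ emb1 (f u) = y) \/ (exists u, emb2 u = x /\ emb2 (g u) = y))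
  (e x y).
Proof.
apply: (iffP orP) => [|[]].
- by case=> /existsP[u /andP[/eqP h1 /eqP h2]]; [left|right]; exists u.
- by case=> u [<- <-]; left; apply/existsP; exists u; rewrite !eqxx.
- by case=> u [<- <-]; right; apply/existsP; exists u; rewrite !eqxx.
Qed.

Lemma edge_d1 u y : emb1 (f u) = y -> e (emb1 u) y.
Proof. by move=> Ey; apply/comp_edgeP; left; exists u. Qed.

Lemma edge_d2 u y : emb2 (g u) = y -> e (emb2 u) y.
Proof. by move=> Ey; apply/comp_edgeP; right; exists u. Qed.

Lemma edge_bot m y : emb1 (f (false, m)) = y -> e (lvl 0, m) y.
Proof. exact: (@edge_d1 (false, m)). Qed.

Lemma edge_mid1 m y : emb1 (f (true, m)) = y -> e (lvl 1, m) y.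
Proof. exact: (@edge_d1 (true, m)). Qed.

Lemma edge_mid2 m y : emb2 (g (false, m)) = y -> e (lvl 1, m) y.
Proof. exact: (@edge_d2 (false, m)). Qed.

Lemma edge_top m y : emb2 (g (true, m)) = y -> e (lvl 2, m) y.
Proof. exact: (@edge_d2 (true, m)). Qed.

Lemma comp_edge_sym : symmetric e.
Proof.
suff E x y : e x y -> e y x by move=> x y; apply/idP/idP; apply: E.
case/comp_edgeP=> -[u [<- <-]].
  by rewrite -{2}[u]fK; apply: edge_d1.
by rewrite -{2}[u]gK; apply: edge_d2.
Qed.

Lemma comp_edge_mid m y : e (lvl 1, m) y -> y = emb1 (f (true, m)) \/ y = emb2 (g (false, m)).
Proof.
case/comp_edgeP=> -[u [Eu <-]]; [left|right].
  by have /emb1_inj -> : emb1 u = emb1 (true, m) by rewrite Eu.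
by have /emb2_inj -> : emb2 u = emb2 (false, m) by rewrite Eu.
Qed.

(* Each vertex of the stacked picture lies on one strand of each diagram, so it has at most
   two neighbours, and at most one if it is on the outer rows. *)
Lemma comp_edge_deg2 x y z w : e x y -> e x z -> e x w -> [\/ y = z, y = w | z = w].
Proof.
have E1 u u' : emb1 u = emb1 u' -> emb1 (f u) = emb1 (f u') by move/emb1_inj->.
have E2 u u' : emb2 u = emb2 u' -> emb2 (g u) = emb2 (g u') by move/emb2_inj->.
move=> /comp_edgeP[[u1 [<- <-]]|[u1 [<- <-]]] /comp_edgeP[[u2 [h2 <-]]|[u2 [h2 <-]]]
        /comp_edgeP[[u3 [h3 <-]]|[u3 [h3 <-]]];
  by [apply: Or31; first [apply: E1 | apply: E2]; rewrite ?h2 ?h3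
     |apply: Or32; first [apply: E1 | apply: E2]; rewrite ?h2 ?h3
     |apply: Or33; first [apply: E1 | apply: E2]; rewrite ?h2 ?h3].
Qed.

Lemma comp_edge_outer u y z : e (outer u) y -> e (outer u) z -> y = z.
Proof.
have nmid x : x = outer u -> ~~ midrow x by move->; rewrite outer_midrowF.
move=> /comp_edgeP[[u1 [h1 <-]]|[u1 [h1 <-]]] /comp_edgeP[[u2 [h2 <-]]|[u2 [h2 <-]]].
- by have /emb1_inj -> : emb1 u1 = emb1 u2 by rewrite h1 h2.
- by case/negP: (nmid _ h1); apply: emb1_emb2_midrow (etrans h1 (esym h2)).
- by case/negP: (nmid _ h2); apply: emb1_emb2_midrow (etrans h2 (esym h1)).
- by have /emb2_inj -> : emb2 u1 = emb2 u2 by rewrite h1 h2.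
Qed.

Lemma connect_closed (S : pred W) x y :
  (forall a b, S a -> e a b -> S b) -> connect e x y -> S x -> S y.
Proof.
move=> clS /connectP[p + ->]; elim: p x => //= z p IH x /andP[exz pth] Sx.
exact: IH pth (clS _ _ Sx exz).
Qed.

Fixpoint nonbacktracking (p : seq W) : bool :=
  if p is x :: p' then (if p' is _ :: z :: _ then x != z else true) && nonbacktracking p'
  else true.

Lemma nonbacktracking_nth d p k :
  nonbacktracking p -> (k.+2 < size p)%N -> nth d p k != nth d p k.+2.
Proof.
elim: p k => //= x p IH [|k].
  by case: p IH => [|y [|z p]] //= IH /andP[].
by case/andP=> _ h hk; apply: IH.
Qed.

(* A non-backtracking walk in a graph of degree at most two, with both ends of degree one,
   is a whole connected component. *)
Lemma comp_by_path v w q :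
  path e (outer v) (rcons q (outer w)) -> all midrow q ->
  nonbacktracking (outer v :: rcons q (outer w)) -> v != w -> Defs.comp f g v = w.
Proof.
move=> pth midq nb vw.
set S := outer v :: rcons q (outer w).
have szS : size S = (size q).+2 by rewrite /= size_rcons.
have eS i : (i < (size q).+1)%N -> e (nth (outer v) S i) (nth (outer v) S i.+1).
  by move=> hi; apply: (pathP (outer v) pth); rewrite size_rcons.
have inS i : (i < (size q).+2)%N -> nth (outer v) S i \in S.
  by move=> hi; apply: mem_nth; rewrite szS.
have lastS : nth (outer v) S (size q).+1 = outer w by rewrite /= nth_rcons ltnn eqxx.
have closedS a b : a \in S -> e a b -> b \in S.
  move=> aS; have := nth_index (outer v) aS; rewrite -index_mem szS in aS.
  case: (index a S) aS => [|k] hk <- eab.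
    by rewrite (comp_edge_outer eab (eS 0%N isT)) inS.
  have ek := eS k hk; rewrite comp_edge_sym in ek.
  case: (ltnP k.+1 (size q).+1) => hk2.
    case: (comp_edge_deg2 eab ek (eS _ hk2)) => [->|->|h]; try by rewrite inS // ltnW.
    have hk3 : (k.+2 < size S)%N by rewrite szS.
    by move: (nonbacktracking_nth (outer v) nb hk3); rewrite h eqxx.
  move: eab ek; have -> : k = size q by lia.
  rewrite lastS => eab ek.
  by rewrite (comp_edge_outer eab ek) inS.
rewrite /Defs.comp ffunE; case: pickP => [w' /andP[w'v cw']|none].
  have : outer w' \in S by apply: (connect_closed closedS cw'); apply: mem_head.
  rewrite inE mem_rcons inE => /or3P[/eqP/outer_inj|/eqP/outer_inj //|w'q].
    by move=> Ew'; rewrite Ew' eqxx in w'v.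
  by have := allP midq _ w'q; rewrite outer_midrowF.
have := none w; rewrite eq_sym vw /= => /negbT/negP; case.
by apply: (path_connect pth); rewrite inE mem_rcons mem_head orbT.
Qed.

Lemma loops_eq0 :
  (forall m, exists y, ~~ midrow y /\ connect e (lvl 1, m) y) -> loops f g = 0%N.
Proof.
move=> H; apply/eqP; rewrite cards_eq0; apply/eqP/setP => x; rewrite !inE.
apply/negbTE/and3P => -[mx _ /forallP allmid].
have [y [ny cy]] := H x.2; rewrite -midrowE // in cy.
by move: (allmid y); rewrite cy /= => my; rewrite /midrow my in ny.
Qed.

Lemma loops_eq1 j k :
  (forall y, e (lvl 1, j) y -> y = (lvl 1, k)) ->
  (forall y, e (lvl 1, k) y -> y = (lvl 1, j)) -> e (lvl 1, j) (lvl 1, k) ->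
  (forall m, m != j -> m != k -> exists y, ~~ midrow y /\ connect e (lvl 1, m) y) ->
  loops f g = 1%N.
Proof.
move=> ej ek ejk H.
have esym : connect_sym e by apply: sym_connect_sym; apply: comp_edge_sym.
pose S : pred W := fun x => (x == (lvl 1, j)) || (x == (lvl 1, k)).
have closedS a b : S a -> e a b -> S b.
  by case/orP=> /eqP-> => [/ej|/ek] ->; rewrite /S eqxx ?orbT.
have midS x : S x -> midrow x by case/orP=> /eqP->.
have Sj : S (lvl 1, j) by rewrite /S eqxx.
rewrite /loops (_ : [set x | _] = [set fingraph.root e (lvl 1, j)]) ?cards1 //.
apply/setP => x; rewrite !inE; apply/idP/eqP => [/and3P[mx /eqP rx /forallP allmid]|->].
  have Sx : S x.
    case: (eqVneq x.2 j) => [xj|xj]; first by rewrite (midrowE mx) xj /S eqxx.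
    case: (eqVneq x.2 k) => [xk|xk]; first by rewrite (midrowE mx) xk /S eqxx orbT.
    have [y [ny cy]] := H _ xj xk; rewrite -(midrowE mx) in cy.
    by move: (allmid y); rewrite cy /= => my; rewrite /midrow my in ny.
  have cx : connect e (lvl 1, j) x.
    by case/orP: Sx => /eqP->; [apply: connect0 | apply: connect1].
  by rewrite -rx; apply/(fingraph.rootP esym); rewrite esym.
have cr := connect_root e (lvl 1, j).
apply/and3P; split.
- exact: midS (connect_closed closedS cr Sj).
- by rewrite (fingraph.root_root esym).
- apply/forallP=> y; apply/implyP => cy.
  exact: midS (connect_closed closedS (connect_trans cr cy) Sj).
Qed.

End CompositionGraph.

Section Diagrams.
Variables (r s : nat).
Local Notation n := (r + s).
Local Notation V := (V r s).

Definition permd (σ : 'I_n -> 'I_n) : {ffun V -> V} := [ffun v => (~~ v.1, σ v.2)].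

(* The paper's e_{j+1,k+1}, for 0-based positions [j], [k]. *)
Definition ediag (j k : 'I_n) : {ffun V -> V} :=
  [ffun v => if v.2 == j then (v.1, k) else if v.2 == k then (v.1, j) else (~~ v.1, v.2)].

Definition act_bot (σ : 'I_n -> 'I_n) (v : V) : V := if v.1 then v else (false, σ v.2).

Lemma permdE σ b i : permd σ (b, i) = (~~ b, σ i).
Proof. by rewrite ffunE. Qed.

Lemma ediagEl j k b : ediag j k (b, j) = (b, k).
Proof. by rewrite ffunE /= eqxx. Qed.

Lemma ediagEr j k b : j != k -> ediag j k (b, k) = (b, j).
Proof. by move=> jk; rewrite ffunE /= eq_sym (negbTE jk) eqxx. Qed.

Lemma ediagEo j k b i : i != j -> i != k -> ediag j k (b, i) = (~~ b, i).
Proof. by move=> ij ik; rewrite ffunE /= (negbTE ij) (negbTE ik). Qed.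

Lemma permdK σ : involutive σ -> involutive (permd σ).
Proof. by move=> σK [b i]; rewrite !permdE negbK σK. Qed.

Lemma permd_fpf σ x : permd σ x != x.
Proof. by case: x => [b i]; rewrite permdE xpair_eqE; case: b. Qed.

Lemma ediagK j k : j != k -> involutive (ediag j k).
Proof.
move=> jk [b i]; case: (eqVneq i j) => [->|ij]; first by rewrite ediagEl ediagEr.
case: (eqVneq i k) => [->|ik]; first by rewrite ediagEr // ediagEl.
by rewrite !ediagEo // negbK.
Qed.

Lemma ediagC j k : j != k -> ediag j k = ediag k j.
Proof.
move=> jk; apply/ffunP => -[b i]; rewrite !ffunE /=.
by case: (eqVneq i j) => [->|//]; rewrite (negbTE jk).
Qed.

End Diagrams.

Lemma involutive_eq (T : Type) (f : T -> T) x y : involutive f -> f x = y -> f y = x.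
Proof. by move=> fK <-. Qed.

Ltac diag_simpl := repeat (rewrite ?eqxx /=; match goal with
 | h : is_true (?a != ?b) |- context [?a == ?b] => rewrite (negbTE h)
 | h : is_true (?a != ?b) |- context [?b == ?a] => rewrite [b == a]eq_sym (negbTE h)
 | H : ?a = _ |- context [?a] => rewrite H
 | |- context [@fun_of_fin _ _ _ (permd ?σ) (@pair _ _ ?b ?i)] => rewrite permdE
 | |- context [@fun_of_fin _ _ _ (ediag ?j ?k) (@pair _ _ ?b ?j)] => rewrite ediagEl
 | |- context [@fun_of_fin _ _ _ (ediag ?j ?k) (@pair _ _ ?b ?k)] =>
     rewrite ediagEr; [|by rewrite // eq_sym]
 | |- context [@fun_of_fin _ _ _ (ediag ?j ?k) (@pair _ _ ?b ?i)] =>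
     rewrite ediagEo; [|by rewrite // eq_sym|by rewrite // eq_sym]
 end); rewrite ?eqxx /=.

(* Discharges the side conditions of [comp_by_path] for an explicitly given walk. *)
Ltac walk := rewrite /outer /=; repeat (apply/andP; split); try done; rewrite /=;
  try first [ by apply: edge_bot; diag_simpl | by apply: edge_mid1; diag_simpl
            | by apply: edge_mid2; diag_simpl | by apply: edge_top; diag_simpl
            | by diag_simpl | by rewrite eq_sym; diag_simpl
            | match goal with
              | Hf : forall x, is_true (?F x != x), H : ?F ?x = ?y |- is_true (?x != ?y) =>
                  rewrite -H eq_sym; exact: Hf
              end ].

Section PermdBelow.
Variables (r s : nat) (σ : 'I_(r + s) -> 'I_(r + s)) (g : {ffun V r s -> V r s}).
Hypotheses (σK : involutive σ) (gK : involutive g) (g_fpf : forall x, g x != x).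

Lemma comp_permd : Defs.comp (permd σ) g = [ffun v => act_bot σ (g (act_bot σ v))].
Proof.
have pK := permdK σK.
apply/ffunP => -[[] i]; rewrite [RHS]ffunE /act_bot /=.
  case Eg: (g (true, i)) => [[] p] /=.
    by apply: (comp_by_path pK gK (q := [::])); walk.
  by apply: (comp_by_path pK gK (q := [:: (lvl 1, p)])); walk.
case Eg: (g (false, σ i)) => [[] p] /=.
  by apply: (comp_by_path pK gK (q := [:: (lvl 1, σ i)])); walk.
have pi : p != σ i by apply/eqP => Ep; move: (g_fpf (false, σ i)); rewrite Eg Ep eqxx.
apply: (comp_by_path pK gK (q := [:: (lvl 1, σ i); (lvl 1, p)])); walk.
by rewrite xpair_eqE /= -(can_eq σK) σK eq_sym.
Qed.

Lemma loops_permd : loops (permd σ) g = 0%N.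
Proof.
apply: loops_eq0 => m; exists (lvl 0, σ m); split => //.
by apply: connect1; apply: edge_mid1; rewrite permdE.
Qed.

End PermdBelow.

Section EdiagAbove.
Variables (r s : nat) (f : {ffun V r s -> V r s}) (j k : 'I_(r + s)).
Hypotheses (fK : involutive f) (f_fpf : forall x, f x != x) (jk : j != k).
Hypotheses (fj : f (true, j) = (false, j)) (fk : f (true, k) = (false, k)).

Lemma comp_ediag_above :
  Defs.comp f (ediag j k) = [ffun v => if (v.2 == j) || (v.2 == k) then ediag j k v else f v].
Proof.
have eK := ediagK jk; have fj' := involutive_eq fK fj; have fk' := involutive_eq fK fk.
apply/ffunP => -[b i]; rewrite [RHS]ffunE /=.
case: (eqVneq i j) => [->|ij] /=.
  case: b; first by apply: (comp_by_path fK eK (q := [::])); walk.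
  by apply: (comp_by_path fK eK (q := [:: (lvl 1, j); (lvl 1, k)])); walk.
case: (eqVneq i k) => [->|ik] /=.
  case: b; first by apply: (comp_by_path fK eK (q := [::])); walk.
  by apply: (comp_by_path fK eK (q := [:: (lvl 1, k); (lvl 1, j)])); walk.
case: b.
  case Ef: (f (true, i)) => [[] m].
    have fm := involutive_eq fK Ef.
    have mj : m != j by apply/eqP => Em; move: fm; rewrite Em fj.
    have mk : m != k by apply/eqP => Em; move: fm; rewrite Em fk.
    have mi : m != i by apply/eqP => Em; move: (f_fpf (true, i)); rewrite Ef Em eqxx.
    by apply: (comp_by_path fK eK (q := [:: (lvl 1, i); (lvl 1, m)])); walk.
  by apply: (comp_by_path fK eK (q := [:: (lvl 1, i)])); walk.
case Ef: (f (false, i)) => [[] m].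
  have fm := involutive_eq fK Ef.
  have mj : m != j by apply/eqP => Em; move: fm; rewrite Em fj => -[/eqP]; rewrite eq_sym (negbTE ij).
  have mk : m != k by apply/eqP => Em; move: fm; rewrite Em fk => -[/eqP]; rewrite eq_sym (negbTE ik).
  by apply: (comp_by_path fK eK (q := [:: (lvl 1, m)])); walk.
by apply: (comp_by_path fK eK (q := [::])); walk.
Qed.

Lemma loops_ediag_above : loops f (ediag j k) = 0%N.
Proof.
apply: loops_eq0 => m.
case: (eqVneq m j) => [->|mj].
  by exists (lvl 0, j); split => //; apply: connect1; apply: edge_mid1; rewrite fj.
case: (eqVneq m k) => [->|mk].
  by exists (lvl 0, k); split => //; apply: connect1; apply: edge_mid1; rewrite fk.
by exists (lvl 2, m); split => //; apply: connect1; apply: edge_mid2; rewrite ediagEo.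
Qed.

End EdiagAbove.

Section EdiagBelow.
Variables (r s : nat) (T : {ffun V r s -> V r s}) (j k : 'I_(r + s)).
Hypotheses (TK : involutive T) (T_fpf : forall x, T x != x) (jk : j != k).
Let eK := ediagK jk.

Section Transposition.
Variable m : 'I_(r + s).
Hypotheses (Tk : T (false, k) = (false, m)) (mj : m != j).
Local Notation σ := (tperm j m).
Let Tm := involutive_eq TK Tk.
Let mk : m != k.
Proof. by apply/eqP => Em; move: (T_fpf (false, k)); rewrite Tk Em eqxx. Qed.
Let σj : σ j = m. Proof. exact: tpermL. Qed.
Let σm : σ m = j. Proof. exact: tpermR. Qed.
Let σk : σ k = k. Proof. by rewrite tpermD // eq_sym. Qed.
Let σo i : i != j -> i != m -> σ i = i.
Proof. by move=> ij im; rewrite tpermD // eq_sym. Qed.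

Lemma comp_ediag_below_top i : Defs.comp (ediag j k) T (true, i) = act_bot σ (T (true, i)).
Proof.
rewrite /act_bot; case ET: (T (true, i)) => [[] p] /=.
  by apply: (comp_by_path eK TK (q := [::])); walk.
have Tp := involutive_eq TK ET.
have pk : p != k by apply/eqP => Ep; move: Tp; rewrite Ep Tk.
have pm : p != m by apply/eqP => Ep; move: Tp; rewrite Ep Tm.
case: (eqVneq p j) => [Ep|pj]; last rewrite σo //.
  subst p; rewrite σj.
  by apply: (comp_by_path eK TK (q := [:: (lvl 1, j); (lvl 1, k); (lvl 1, m)])); walk.
by apply: (comp_by_path eK TK (q := [:: (lvl 1, p)])); walk.
Qed.

Lemma comp_ediag_below_bot i :
  Defs.comp (ediag j k) T (false, i) = act_bot σ (T (false, σ i)).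
Proof.
rewrite /act_bot.
case: (eqVneq i j) => [->|ij].
  by rewrite σj Tm /= σk; apply: (comp_by_path eK TK (q := [::])); walk.
case: (eqVneq i k) => [->|ik].
  by rewrite σk Tk /= σm; apply: (comp_by_path eK TK (q := [::])); walk.
case: (eqVneq i m) => [->|im].
  rewrite σm; case ET: (T (false, j)) => [[] p] /=.
    by apply: (comp_by_path eK TK (q := [:: (lvl 1, m); (lvl 1, k); (lvl 1, j)])); walk.
  have Tp := involutive_eq TK ET.
  have pj : p != j by apply/eqP => Ep; move: (T_fpf (false, j)); rewrite ET Ep eqxx.
  have pk : p != k.
    by apply/eqP => Ep; move: Tp; rewrite Ep Tk => -[/eqP]; rewrite (negbTE mj).
  have pm : p != m.
    by apply/eqP => Ep; move: Tp; rewrite Ep Tm => -[/eqP]; rewrite eq_sym (negbTE jk).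
  rewrite σo //.
  by apply: (comp_by_path eK TK (q := [:: (lvl 1, m); (lvl 1, k); (lvl 1, j); (lvl 1, p)]));
    walk.
rewrite σo //; case ET: (T (false, i)) => [[] p] /=.
  by apply: (comp_by_path eK TK (q := [:: (lvl 1, i)])); walk.
have Tp := involutive_eq TK ET.
have pi : p != i by apply/eqP => Ep; move: (T_fpf (false, i)); rewrite ET Ep eqxx.
have pk : p != k.
  by apply/eqP => Ep; move: Tp; rewrite Ep Tk => -[/eqP]; rewrite eq_sym (negbTE im).
have pm : p != m.
  by apply/eqP => Ep; move: Tp; rewrite Ep Tm => -[/eqP]; rewrite eq_sym (negbTE ik).
case: (eqVneq p j) => [Ep|pj]; last rewrite σo //.
  subst p; rewrite σj.
  by apply: (comp_by_path eK TK (q := [:: (lvl 1, i); (lvl 1, j); (lvl 1, k); (lvl 1, m)]));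
    walk.
by apply: (comp_by_path eK TK (q := [:: (lvl 1, i); (lvl 1, p)])); walk.
Qed.

Lemma comp_ediag_below : Defs.comp (ediag j k) T = Defs.comp (permd σ) T.
Proof.
rewrite (comp_permd (@tpermK _ j m) TK T_fpf).
by apply/ffunP => -[[] i]; rewrite [RHS]ffunE ?comp_ediag_below_top ?comp_ediag_below_bot.
Qed.

Lemma loops_ediag_below : loops (ediag j k) T = 0%N.
Proof.
have cm : connect (comp_edge (ediag j k) T) (lvl 1, m) (lvl 0, m).
  by apply: connect1; apply: edge_mid1; rewrite ediagEo.
have ck : connect (comp_edge (ediag j k) T) (lvl 1, k) (lvl 0, m).
  by apply: connect_trans cm; apply: connect1; apply: edge_mid2; rewrite Tk.
apply: loops_eq0 => q; case: (eqVneq q j) => [->|qj].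
  exists (lvl 0, m); split => //; apply: connect_trans ck.
  by apply: connect1; apply: edge_mid1; rewrite ediagEl.
case: (eqVneq q k) => [->|qk]; first by exists (lvl 0, m).
by exists (lvl 0, q); split => //; apply: connect1; apply: edge_mid1; rewrite ediagEo.
Qed.

End Transposition.

Section Loop.
Hypothesis Tk : T (false, k) = (false, j).
Let Tj := involutive_eq TK Tk.

Lemma comp_ediag_loop : Defs.comp (ediag j k) T = T.
Proof.
apply/ffunP => -[[] i].
  case ET: (T (true, i)) => [[] p].
    by apply: (comp_by_path eK TK (q := [::])); walk.
  have Tp := involutive_eq TK ET.
  have pk : p != k by apply/eqP => Ep; move: Tp; rewrite Ep Tk.
  have pj : p != j by apply/eqP => Ep; move: Tp; rewrite Ep Tj.
  by apply: (comp_by_path eK TK (q := [:: (lvl 1, p)])); walk.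
case: (eqVneq i j) => [->|ij]; first by rewrite Tj; apply: (comp_by_path eK TK (q := [::])); walk.
case: (eqVneq i k) => [->|ik]; first by rewrite Tk; apply: (comp_by_path eK TK (q := [::])); walk.
case ET: (T (false, i)) => [[] p].
  by apply: (comp_by_path eK TK (q := [:: (lvl 1, i)])); walk.
have Tp := involutive_eq TK ET.
have pk : p != k.
  by apply/eqP => Ep; move: Tp; rewrite Ep Tk => -[/eqP]; rewrite eq_sym (negbTE ij).
have pj : p != j.
  by apply/eqP => Ep; move: Tp; rewrite Ep Tj => -[/eqP]; rewrite eq_sym (negbTE ik).
by apply: (comp_by_path eK TK (q := [:: (lvl 1, i); (lvl 1, p)])); walk.
Qed.

Lemma loops_ediag_loop : loops (ediag j k) T = 1%N.
Proof.
apply: (loops_eq1 (j := j) (k := k) eK TK).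
- by move=> y /comp_edge_mid [->|->]; rewrite ?ediagEl ?Tj.
- by move=> y /comp_edge_mid [->|->]; rewrite ?ediagEr ?Tk.
- by apply: edge_mid1; rewrite ediagEl.
move=> q qj qk; exists (lvl 0, q); split => //.
by apply: connect1; apply: edge_mid1; rewrite ediagEo.
Qed.

End Loop.
End EdiagBelow.

Section TauDiagram.
Variables (r s : nat).
Local Notation n := (r + s).
Local Notation V := (V r s).

(* The reflection [i |-> 2r - 1 - i] of 0-based positions about the wall; it is only
   meaningful for [i < 2r]. *)
Definition mirror (i : 'I_n) : 'I_n := insubd i (r + r - i.+1).

Definition tau_span (t : nat) (i : 'I_n) := (r - t <= i < r + t)%N.

Definition taud (t : nat) : {ffun V -> V} :=
  [ffun v => if tau_span t v.2 then (v.1, mirror v.2) else (~~ v.1, v.2)].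

Variable t : nat.
Hypotheses (tr : (t <= r)%N) (ts : (t <= s)%N).
Local Notation span := (tau_span t).

Lemma mirror_val i : span i -> val (mirror i) = (r + r - i.+1)%N.
Proof. by move=> /andP[i1 i2]; rewrite /mirror val_insubd ifT //; lia. Qed.

Lemma mirror_span i : span i -> span (mirror i).
Proof. by move=> hi; rewrite /tau_span mirror_val //; case/andP: hi => *; apply/andP; lia. Qed.

Lemma mirrorK i : span i -> mirror (mirror i) = i.
Proof.
move=> hi; apply: val_inj; rewrite (mirror_val (mirror_span hi)) (mirror_val hi) /=.
by case/andP: hi => *; lia.
Qed.

Lemma mirror_neq i : span i -> mirror i != i.
Proof. by move=> hi; rewrite -val_eqE mirror_val //=; case/andP: hi => *; apply/eqP; lia. Qed.

Lemma mirror_wall i : span i -> (i < r)%N != (mirror i < r)%N.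
Proof.
move=> hi; rewrite mirror_val //; case/andP: hi => *.
by case: (ltnP i r) => ir; apply/eqP; lia.
Qed.

Lemma taudK : involutive (taud t).
Proof.
move=> [b i]; rewrite [taud t (b, i)]ffunE /=; case: ifP => hi; rewrite ffunE /=.
  by rewrite (mirror_span hi) mirrorK.
by rewrite hi negbK.
Qed.

Lemma taud_fpf x : taud t x != x.
Proof.
case: x => b i; rewrite ffunE /=; case: ifP => hi; rewrite xpair_eqE.
  by rewrite (negbTE (mirror_neq hi)) andbF.
by case: b; rewrite ?eqxx.
Qed.

Lemma taud_walled x : walled x (taud t x).
Proof.
case: x => b i; rewrite ffunE /=; case: ifP => hi; rewrite /walled /=.
  by rewrite eqxx mirror_wall.
by case: b; rewrite eqxx.
Qed.

End TauDiagram.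

Lemma taud_step r s t (J K : 'I_(r + s)) : (t < r)%N -> (t < s)%N ->
  J = r - t.+1 :> nat -> K = r + t :> nat ->
  Defs.comp (taud r s t) (ediag J K) = taud r s t.+1 /\ loops (taud r s t) (ediag J K) = 0%N.
Proof.
move=> tr ts hJ hK.
have JK : J != K by apply/eqP => /(congr1 val) /=; rewrite hJ hK; lia.
have tauJ : taud r s t (true, J) = (false, J) by rewrite ffunE /= /tau_span hJ ifF //; lia.
have tauK : taud r s t (true, K) = (false, K) by rewrite ffunE /= /tau_span hK ifF //; lia.
have tauI := taudK (ltnW tr) (ltnW ts).
split; last exact: loops_ediag_above.
rewrite (comp_ediag_above tauI (@taud_fpf _ _ _ (ltnW tr) (ltnW ts)) JK tauJ tauK).
apply/ffunP => -[b i]; rewrite [LHS]ffunE [RHS]ffunE /=.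
have [spanJ spanK] : tau_span t.+1 J /\ tau_span t.+1 K by rewrite /tau_span hJ hK; split; lia.
case: (eqVneq i J) => [->|iJ] /=.
  rewrite ediagEl spanJ; congr pair; apply: val_inj.
  by rewrite (mirror_val tr ts spanJ) /= hJ hK; lia.
case: (eqVneq i K) => [->|iK] /=.
  rewrite ediagEr // spanK; congr pair; apply: val_inj.
  by rewrite (mirror_val tr ts spanK) /= hJ hK; lia.
rewrite ffunE /=; congr (if _ then _ else _).
move: iJ iK; rewrite -!val_eqE /= hJ hK /tau_span => /eqP iJ /eqP iK.
by apply/idP/idP => /andP[i1 i2]; apply/andP; lia.
Qed.

Section Basis.
Variables (r s : nat).
Local Notation n := (r + s).
Local Notation V := (V r s).

Lemma is_wbdP (f : {ffun V -> V}) :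
  involutive f -> (forall x, f x != x) -> (forall x, walled x (f x)) -> is_wbd f.
Proof. by move=> fK f_fpf fw; apply/forallP => x; rewrite fK eqxx f_fpf fw. Qed.

Lemma permd_wbd (σ : 'I_n -> 'I_n) : involutive σ -> (forall i, (σ i < r)%N = (i < r)%N) -> is_wbd (permd σ).
Proof.
move=> σK σr; apply: is_wbdP; [exact: permdK | exact: permd_fpf |].
by move=> [b i]; rewrite permdE /walled /= σr eqxx; case: b.
Qed.

Lemma ediag_wbd (j k : 'I_n) : (j < r)%N -> (r <= k)%N -> is_wbd (ediag j k).
Proof.
move=> jr rk; have jk : j != k by apply/eqP => Ejk; move: jr; rewrite Ejk ltnNge rk.
apply: is_wbdP => [|[b i]|[b i]]; first exact: ediagK.
  case: (eqVneq i j) => [->|ij]; first by rewrite ediagEl xpair_eqE eq_sym (negbTE jk) andbF.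
  case: (eqVneq i k) => [->|ik]; first by rewrite ediagEr // xpair_eqE (negbTE jk) andbF.
  by rewrite ediagEo // xpair_eqE; case: b.
case: (eqVneq i j) => [->|ij]; first by rewrite ediagEl /walled /= eqxx jr ltnNge rk.
case: (eqVneq i k) => [->|ik]; first by rewrite ediagEr // /walled /= eqxx jr ltnNge rk.
by rewrite ediagEo // /walled /=; case: b; rewrite eqxx.
Qed.

Lemma taud_wbd t : (t <= r)%N -> (t <= s)%N -> is_wbd (taud r s t).
Proof. by move=> tr ts; apply: is_wbdP; [exact: taudK | exact: taud_fpf | exact: taud_walled]. Qed.

Lemma insubd_ord (i j : 'I_n) (m : nat) : m = j -> insubd i m = j.
Proof. by move=> ->; apply: val_inj; rewrite val_insubd ltn_ord. Qed.

(* [trB] and [eB] take 1-based vertex numbers [a], [b], while [A], [B] are 0-based. *)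
Section OneBased.
Variables (a b : nat) (A B : 'I_n).
Hypotheses (hA : A = a.-1 :> nat) (hB : B = b.-1 :> nat) (a0 : (0 < a)%N) (b0 : (0 < b)%N).

Let succ_eq (i : 'I_n) : ((i.+1 == a) = (i == A)) * ((i.+1 == b) = (i == B)).
Proof. by rewrite -!val_eqE /= hA hB; case: a a0 => // a' _; case: b b0. Qed.

Lemma trB_permd : trB r s a b = dg (permd (tperm A B)).
Proof.
congr dg; apply/ffunP => -[x i]; rewrite !ffunE /=; congr pair.
rewrite /sw !succ_eq; case: tpermP => [->|->|/eqP/negbTE-> /eqP/negbTE->].
- by rewrite eqxx; apply: insubd_ord.
- by case: eqP => [<-|_]; rewrite ?eqxx; apply: insubd_ord.
- exact: insubd_ord.
Qed.

Lemma eB_ediag : A != B -> eB r s a b = dg (ediag A B).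
Proof.
move=> AB; congr dg; apply/ffunP => -[x i]; rewrite !ffunE /= /sw !succ_eq.
case: (eqVneq i A) => [->|iA] /=; first exact/congr1/insubd_ord.
case: (eqVneq i B) => [->|iB] //=; exact/congr1/insubd_ord.
Qed.

End OneBased.
End Basis.

Section Algebra.
Local Open Scope ring_scope.
Variables (r s : nat) (delta : algC).
Local Notation mB := (mulB r s delta).

Lemma mulBDl x y z : mB (x + y) z = mB x z + mB y z.
Proof.
apply/ffunP => d; rewrite !ffunE -big_split; apply: eq_bigr => d1 _.
by rewrite -big_split; apply: eq_bigr => d2 _; rewrite !ffunE !mulrDl.
Qed.

Lemma mulB0l z : mB 0 z = 0.
Proof.
apply/ffunP => d; rewrite !ffunE big1 // => d1 _.
by rewrite big1 // => d2 _; rewrite ffunE !mul0r.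
Qed.

Lemma mulBNl x z : mB (- x) z = - mB x z.
Proof.
apply/ffunP => d; rewrite !ffunE -sumrN; apply: eq_bigr => d1 _.
by rewrite -sumrN; apply: eq_bigr => d2 _; rewrite !ffunE !mulNr.
Qed.

Lemma mulB_suml I (rI : seq I) (P : pred I) (F : I -> WBA r s) z :
  mB (\sum_(i <- rI | P i) F i) z = \sum_(i <- rI | P i) mB (F i) z.
Proof. exact: (big_morph (mB^~ z) (fun x y => mulBDl x y z) (mulB0l z)). Qed.

Lemma mulB_scl c x z : mB (scB r s c x) z = scB r s c (mB x z).
Proof.
apply/ffunP => d; rewrite !ffunE mulr_sumr; apply: eq_bigr => d1 _.
by rewrite mulr_sumr; apply: eq_bigr => d2 _; rewrite !ffunE !mulrA.
Qed.

Lemma scB1 x : scB r s 1 x = x.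
Proof. by apply/ffunP => d; rewrite ffunE mul1r. Qed.

Lemma mulB_dg f g : is_wbd f -> is_wbd g ->
  mB (dg f) (dg g) = scB r s (delta ^+ loops f g) (dg (Defs.comp f g)).
Proof.
move=> wf wg; apply/ffunP => d; rewrite !ffunE.
pose df : WBD r s := exist _ f wf; pose dg' : WBD r s := exist _ g wg.
have dgE (d' e : WBD r s) h : val e = h -> dg h d' = ((d' == e) : nat)%:R.
  by move=> <-; rewrite ffunE.
rewrite (bigD1 df) //= [X in _ + X]big1 => [|d1 d1f]; last first.
  by rewrite big1 // => d2 _; rewrite (dgE _ df) // (negbTE d1f) mulr0n !mul0r.
rewrite addr0 big_mkcond (bigD1 dg') //= big1 => [|d2 d2g]; last first.
  by case: ifP => // _; rewrite (dgE d2 dg') // (negbTE d2g) mulr0n mulr0 mul0r.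
rewrite addr0 (dgE df df) // (dgE dg' dg') // !eqxx !mul1r eq_sym.
by case: eqP; rewrite ?mulr1 ?mulr0.
Qed.

End Algebra.

Lemma tauB_dg r s delta t : (t <= minn r s)%N -> tauB r s delta t = dg (taud r s t).
Proof.
elim: t => [_|t IH ht].
  congr dg; apply/ffunP => -[b i]; rewrite !ffunE /= /tau_span.
  by rewrite ifF //; apply/negbTE/negP => /andP[]; lia.
have [tr ts] : (t < r)%N /\ (t < s)%N by lia.
have pJ : (r - t.+1 < r + s)%N by lia.
have pK : (r + t < r + s)%N by lia.
pose J := Ordinal pJ; pose K := Ordinal pK.
have [comp_tau loops_tau] := @taud_step r s t J K tr ts erefl erefl.
rewrite /= IH; last by lia.
rewrite (@eB_ediag r s _ _ J K) /=; try lia; last by apply/eqP => /(congr1 val) /=; lia.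
rewrite mulB_dg ?taud_wbd ?ediag_wbd //=; try lia.
by rewrite loops_tau comp_tau scB1.
Qed.

Lemma big_nat_reflect (U : nmodType) (F : nat -> U) lo hi N : (hi <= N.+1)%N ->
  (\sum_(lo <= i < hi) F (N - i)%N = \sum_(N.+1 - hi <= i < N.+1 - lo) F i)%R.
Proof.
elim: hi => [|hi IH] hN; first by rewrite !big_geq //; lia.
have [hlo|lohi] := leqP hi.+1 lo; first by rewrite !big_geq //; lia.
rewrite big_nat_recr /=; last by lia.
rewrite IH; last by lia.
rewrite subSS (@big_ltn _ _ _ (N - hi)); last by lia.
by rewrite -subSn // addrC.
Qed.

Lemma ord_exists n m : (m < n)%N -> {i : 'I_n | i = m :> nat}.
Proof. by move=> mn; exists (Ordinal mn). Qed.

Section TauAction.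
Local Open Scope ring_scope.
Variables (r s : nat) (delta : algC) (t : nat).
Hypotheses (tr : (t <= r)%N) (ts : (t <= s)%N).
Local Notation n := (r + s)%N.
Local Notation mB := (mulB r s delta).
Local Notation T := (taud r s t).
Local Notation tau := (dg (taud r s t)).

Let TK := taudK tr ts.
Let T_fpf := taud_fpf tr ts.
Let T_wbd := taud_wbd tr ts.

Lemma mulB_permd_tau (σ : 'I_n -> 'I_n) :
  involutive σ -> (forall i, (σ i < r)%N = (i < r)%N) ->
  mB (dg (permd σ)) tau = dg (Defs.comp (permd σ) T).
Proof. by move=> σK σr; rewrite mulB_dg ?permd_wbd // loops_permd // scB1. Qed.

Lemma mulB_oneB_tau : mB (oneB r s) tau = tau.
Proof.
rewrite (mulB_permd_tau (σ := id)) // (@comp_permd _ _ id _ (fun _ => erefl) TK T_fpf); congr dg.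
by apply/ffunP => -[[] i]; rewrite ffunE //=; case: (T _) => [[] p].
Qed.

Lemma taud_bot (Y M : 'I_n) : tau_span t Y -> M = (r + r - Y.+1)%N :> nat ->
  T (false, Y) = (false, M).
Proof.
move=> hY hM; rewrite ffunE /= hY; congr pair; apply: val_inj.
by rewrite (mirror_val tr ts hY) /= hM.
Qed.

Lemma mulB_ediag_tau_swap (J K M : 'I_n) :
  is_wbd (ediag J K) -> J != K -> T (false, K) = (false, M) -> M != J ->
  (M < r)%N = (J < r)%N -> mB (dg (ediag J K)) tau = mB (dg (permd (tperm J M))) tau.
Proof.
move=> wJK JK TKM MJ MJr.
have tperm_wall i : (tperm J M i < r)%N = (i < r)%N by case: tpermP => [->|->|//]; rewrite MJr.
rewrite mulB_permd_tau; [|exact: tpermK|by []].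
rewrite mulB_dg // (loops_ediag_below T_fpf TKM MJ) scB1.
by congr dg; apply: comp_ediag_below.
Qed.

Lemma mulB_ediag_tau_loop (J K : 'I_n) : is_wbd (ediag J K) -> J != K ->
  T (false, K) = (false, J) -> mB (dg (ediag J K)) tau = scB r s delta tau.
Proof.
move=> wJK JK TKJ; rewrite mulB_dg //.
by rewrite (loops_ediag_loop TK JK TKJ) (comp_ediag_loop TK T_fpf JK TKJ) expr1.
Qed.

Lemma mulB_eB_tau_right j k : (0 < j <= r)%N -> (r < k <= r + t)%N ->
  j != (r + r + 1 - k)%N -> mB (eB r s j k) tau = mB (trB r s j (r + r + 1 - k)%N) tau.
Proof.
move=> /andP[j0 jr] /andP[rk kt] jk'.
have /ord_exists[X hX] : (j.-1 < n)%N by lia.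
have /ord_exists[Y hY] : (k.-1 < n)%N by lia.
have /ord_exists[M hM] : ((r + r + 1 - k).-1 < n)%N by lia.
have XY : X != Y by apply/eqP => /(congr1 val) /=; lia.
rewrite (trB_permd hX hM) ?(eB_ediag hX hY) //; try lia.
apply: mulB_ediag_tau_swap => //.
- by apply: ediag_wbd; lia.
- by apply: taud_bot; rewrite /tau_span; lia.
- by apply/eqP => /(congr1 val) /=; lia.
- by apply/idP/idP => _; lia.
Qed.

Lemma mulB_eB_tau_left j k : (r - t < j <= r)%N -> (r < k <= n)%N ->
  k != (r + r + 1 - j)%N -> mB (eB r s j k) tau = mB (trB r s (r + r + 1 - j)%N k) tau.
Proof.
move=> /andP[tj jr] /andP[rk kn] kj'.
have /ord_exists[X hX] : (j.-1 < n)%N by lia.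
have /ord_exists[Y hY] : (k.-1 < n)%N by lia.
have /ord_exists[M hM] : ((r + r + 1 - j).-1 < n)%N by lia.
have XY : X != Y by apply/eqP => /(congr1 val) /=; lia.
rewrite (trB_permd hM hY) ?(eB_ediag hX hY) //; try lia.
rewrite ediagC // tpermC; apply: mulB_ediag_tau_swap.
- by rewrite -ediagC //; apply: ediag_wbd; lia.
- by rewrite eq_sym.
- by apply: taud_bot; rewrite /tau_span; lia.
- by apply/eqP => /(congr1 val) /=; lia.
- by apply/idP/idP => h; lia.
Qed.

Lemma mulB_eB_tau_loop k : (r < k <= r + t)%N ->
  mB (eB r s (r + r + 1 - k)%N k) tau = scB r s delta tau.
Proof.
move=> /andP[rk kt].
have /ord_exists[X hX] : ((r + r + 1 - k).-1 < n)%N by lia.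
have /ord_exists[Y hY] : (k.-1 < n)%N by lia.
have XY : X != Y by apply/eqP => /(congr1 val) /=; lia.
rewrite (eB_ediag hX hY) //; try lia.
apply: mulB_ediag_tau_loop => //.
- by apply: ediag_wbd; lia.
- by apply: taud_bot; rewrite /tau_span; lia.
Qed.

Lemma sum_eB_tau_reflect lo hi k : (r - t < lo)%N -> (hi <= r.+1)%N -> (r < k <= n)%N ->
  (k < r + r + 2 - hi)%N || (r + r + 2 - lo <= k)%N ->
  \sum_(lo <= i < hi) mB (eB r s i k) tau =
  \sum_(r + r + 2 - hi <= i < r + r + 2 - lo) mB (trB r s i k) tau.
Proof.
move=> tlo hir /andP[rk kn] k_out.
transitivity (\sum_(lo <= i < hi) (fun j => mB (trB r s j k) tau) ((r + r).+1 - i)%N).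
  apply: eq_big_nat => i /andP[loi ihi]; rewrite -addn1.
  by apply: mulB_eB_tau_left; apply/andP || apply/eqP; lia.
rewrite (@big_nat_reflect _ (fun j => mB (trB r s j k) tau)); last by lia.
by rewrite -[(r + r).+2]addn2.
Qed.

Lemma mulB_LB_tau_mirror k : (r < k <= r + t)%N ->
  mB (LB r s delta k) tau = - mB (LB r s delta (r + r + 1 - k)%N) tau.
Proof.
move=> /andP[rk kt]; set k' := (r + r + 1 - k)%N.
have [k'0 k'r] : (0 < k')%N /\ (k' <= r)%N by lia.
rewrite /LB k'r leqNgt rk /= !mulBDl mulBNl !mulB_suml mulB_scl mulB_oneB_tau.
rewrite (@big_cat_nat _ _ _ k' 1 r.+1) //= ?(@big_ltn _ _ _ k' r.+1) ?ltnS //; last by lia.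
rewrite mulB_eB_tau_loop ?rk // (@sum_eB_tau_reflect k'.+1 r.+1 k); try lia.
have -> : (r + r + 2 - k'.+1 = k)%N by lia.
have -> : (r + r + 2 - r.+1 = r.+1)%N by lia.
have -> : \sum_(1 <= i < k') mB (eB r s i k) tau = \sum_(1 <= i < k') mB (trB r s i k') tau.
  by apply: eq_big_nat => i /andP[i0 ik']; apply: mulB_eB_tau_right; apply/andP || apply/eqP; lia.
by rewrite !opprD !addrA !addrNK.
Qed.

End TauAction.

Unset Implicit Arguments.
Local Open Scope ring_scope.

Theorem mainTheorem7 (r s : nat) (delta : algC) (t : nat)
  (ht1 : (1 <= t)%N) (ht : (t <= minn r s)%N) :
  (forall a : nat, (1 <= a <= t)%N ->
     mulB r s delta (LB r s delta (r - a + 1) + LB r s delta (r + a)) (tauB r s delta t) = 0) /\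
  (forall j : nat, (r + t + 1 <= j <= r + s)%N ->
     mulB r s delta (- (\sum_(r - t + 1 <= i < r.+1) eB r s i j)
                 + \sum_(r + 1 <= i < r + t + 1) trB r s i j)
          (tauB r s delta t) = 0).
Proof.
have [tr ts] : (t <= r)%N /\ (t <= s)%N by lia.
rewrite tauB_dg //; split=> [a /andP[a1 a_t] | j /andP[tj jn]].
  rewrite mulBDl (@mulB_LB_tau_mirror _ _ delta _ tr ts (r + a)); last by lia.
  by rewrite (_ : r + r + 1 - (r + a) = r - a + 1)%N ?addrN //; lia.
rewrite mulBDl mulBNl !mulB_suml (sum_eB_tau_reflect delta tr ts); try lia.
have -> : (r + r + 2 - r.+1 = r + 1)%N by lia.
have -> : (r + r + 2 - (r - t + 1) = r + t + 1)%N by lia.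
by rewrite addNr.
Qed.
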